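(* Let $(\mathbb{K}_{LC}\langle\langle X\rangle\rangle)^\times$ denote the set of invertible elements of the algebra $(\mathbb{K}_{LC}\langle\langle X\rangle\rangle,\sqcup\!\sqcup)$. The shuffle inverse $$(\mathbb{K}_{LC}\langle\langle X\rangle\rangle)^\times\to(\mathbb{K}_{LC}\langle\langle X\rangle\rangle)^\times,\quad c\mapsto (c,\emptyset)^{-1}\sum_{k\geq 0}(c')^{\sqcup\!\sqcup\, k},\qquad c'=\mathbf{1}-c/(c,\emptyset),$$ is well defined and continuous with respect to the Silva topology.
   Context: $\mathbb{K}\in\{\mathbb{R},\mathbb{C}\}$. $X=\{x_0,\ldots,x_m\}$ is a finite alphabet, $X^\ast$ its set of words (including the empty word $\emptyset$). For $M>0$, $\|c\|_{\ell_\infty,M}=\sup_\eta|(c,\eta)|/(M^{|\eta|}|\eta|!)$ on series $c\colon X^\ast\to\mathbb{K}$, and $\ell_{\infty,M}(X^\ast,\mathbb{K})$ is the Banach space of series with finite norm. $\mathbb{K}_{LC}\langle\langle X\rangle\rangle=\bigcup_{M>0}\ell_{\infty,M}(X^\ast,\mathbb{K})$ with the Silva topology, i.e. the locally convex inductive limit topology of these Banach spaces. $\mathbf{1}$ denotes the series $1\cdot\emptyset$. The shuffle product is the bilinear product determined on words by $(x_i\eta)\sqcup\!\sqcup(x_j\xi)=x_i(\eta\sqcup\!\sqcup(x_j\xi))+x_j((x_i\eta)\sqcup\!\sqcup\xi)$, $\eta\sqcup\!\sqcup\emptyset=\emptyset\sqcup\!\sqcup\eta=\eta$, extended bilinearly;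 its unit is $\mathbf{1}$, and the invertible elements are exactly the series with $(c,\emptyset)\neq0$. $(c')^{\sqcup\!\sqcup k}$ is the $k$-fold shuffle power. *)

(* K is a generic numFieldType; the theorem instantiates it
   with K = R and K = R[i] (= C) for an arbitrary realType R. *)
From HB Require Import structures.
From mathcomp Require Import all_boot all_order all_algebra.
From mathcomp Require Import reals complex.
Set Implicit Arguments. Unset Strict Implicit. Unset Printing Implicit Defensive.
Import Order.TTheory GRing.Theory Num.Theory.
Local Open Scope ring_scope.

Section Series.
Variables (K : numFieldType) (m : nat).

(* alphabet X = {x_0, ..., x_m}, words X^*, the empty word is [::] *)
Definition word := seq 'I_m.+1.
Definition series := word -> K.

(* shuffle of two words, as a list of words counted with multiplicity:
   (x_i u) ш (x_j v) = x_i (u ш x_j v) + x_j (x_i u ш v), u ш [] = [] ш u = u *)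
Fixpoint shw (u v : word) {struct u} : seq word :=
  match u with
  | [::] => [:: v]
  | a :: u' =>
      let fix shw_aux (v : word) : seq word :=
        match v with
        | [::] => [:: u]
        | b :: v' => map (cons a) (shw u' v) ++ map (cons b) (shw_aux v')
        end in shw_aux v
  end.

(* bilinear extension of the shuffle to series: only pairs of words (u,v)
   with |u| + |v| = |eta| can produce eta *)
Definition shuffle (c d : series) : series := fun eta =>
  \sum_(i < (size eta).+1) \sum_(u : i.-tuple 'I_m.+1)
    \sum_(v : (size eta - i).-tuple 'I_m.+1)
      c u * d v * (count_mem eta (shw u v))%:R.

Definition one : series := fun eta => if eta is [::] then 1 else 0.

Definition addS (c d : series) : series := fun eta => c eta + d eta.
Definition oppS (c : series) : series := fun eta => - c eta.
Definition scaleS (a : K) (c : series) : series := fun eta => a * c eta.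

Fixpoint shpow (c : series) (k : nat) : series :=
  if k is k'.+1 then shuffle c (shpow c k') else one.

Definition normM_le (M : K) (c : series) (r : K) : Prop :=
  forall eta : word, `|c eta| <= r * M ^+ size eta * (size eta)`!%:R.

Definition ell_inf (M : K) (c : series) : Prop := exists r : K, normM_le M c r.

Definition LC (c : series) : Prop := exists M : K, 0 < M /\ ell_inf M c.

Definition LCunit (c : series) : Prop :=
  LC c /\ exists d : series, LC d /\ shuffle c d = one /\ shuffle d c = one.

(* 0-neighbourhoods of a base of the locally convex inductive limit (Silva)
   topology: absolutely convex subsets V of K_LC<<X>> such that V meets each
   Banach space l_{oo,M} in a 0-neighbourhood (contains a norm ball). *)
Definition silva_zero_nbhd (V : series -> Prop) : Prop :=
  (forall c, V c -> LC c) /\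
  (forall c d (a b : K), V c -> V d -> `|a| + `|b| <= 1 ->
      V (addS (scaleS a c) (scaleS b d))) /\
  (forall M : K, 0 < M -> exists2 r : K, 0 < r &
      forall c, normM_le M c r -> V c).

Definition silva_open (O : series -> Prop) : Prop :=
  (forall c, O c -> LC c) /\
  forall c, O c -> exists V, silva_zero_nbhd V /\ forall v, V v -> O (addS c v).

Definition cprime (c : series) : series :=
  addS one (oppS (scaleS (c [::])^-1 c)).

(* the shuffle inverse (c,[::])^-1 sum_{k>=0} (c')^{ш k}, the sum taken
   coefficientwise; the k-th term has zero coefficient at eta when k > |eta|
   (this is asserted in the theorem), so the coefficientwise sum is finite. *)
Definition shinv (c : series) : series := fun eta =>
  (c [::])^-1 * \sum_(k < (size eta).+1) shpow (cprime c) k eta.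

Definition silva_continuous_on (U : series -> Prop) (f : series -> series) : Prop :=
  forall c, U c -> forall O, silva_open O -> O (f c) ->
    exists O', silva_open O' /\ O' c /\ forall d, U d -> O' d -> O (f d).

Definition prop3p6_statement : Prop :=
  (* the infinite sum is (coefficientwise) well defined *)
  (forall c, LCunit c -> forall eta (k : nat), (size eta < k)%N ->
      shpow (cprime c) k eta = 0) /\
  (forall c, LCunit c -> LCunit (shinv c)) /\
  silva_continuous_on LCunit shinv.

End Series.

(* Normalise c = c_0 (1 - c') with (c', ∅) = 0. Shuffle powers of a series without constant
   term vanish on short words, so sum_k c'^k is a coefficientwise finite sum; its partial sums
   telescope against 1 - c', so it is a right shuffle inverse, and since shuffling by c is
   injective when c_0 <> 0 it is the inverse of every unit c.

   Continuity rests on the Cauchy product estimate: if (a, ∅) = 0, ||a||_M <= r and be > 1,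
   then ||a ш b||_(be M) <= r ||b||_(be M) / (be - 1). With be = 1 + 4 r the series
   sum_k c'^k converges geometrically in l_(oo, be M), and c |-> shinv c is L-Lipschitz from a
   ball of l_(oo, M) into l_(oo, be M). Given a 0-neighbourhood V, choose balls of radius eps_p
   of l_(oo, be^(p+1) M) inside V; the absolutely convex hull W of balls of radius about
   eps_p / L in l_(oo, be^p M) is a Silva 0-neighbourhood. For d in c + W write
   d - c = sum_p a_p with a_p in the p-th ball and walk from c to d adding one a_p at a time:
   the p-th step moves shinv by at most L ||a_p|| in l_(oo, be^(p+1) M), and absolute
   convexity of V collects the steps. *)

From Pilot Require Import Defs.
From mathcomp Require Import all_boot all_order all_algebra.
From mathcomp Require Import reals complex boolp.
From mathcomp Require Import zify ring.
Set Implicit Arguments. Unset Strict Implicit. Unset Printing Implicit Defensive.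
Import Order.TTheory GRing.Theory Num.Theory.
Local Open Scope ring_scope.

Section ShuffleCount.
Variable m : nat.
Local Notation letter := 'I_m.+1.
Implicit Types (u v w eta : word m).

Lemma shw_nilr u : shw u [::] = [:: u].
Proof. by case: u. Qed.

Lemma shw_cons a u b v :
  shw (a :: u) (b :: v) = map (cons a) (shw u (b :: v)) ++ map (cons b) (shw (a :: u) v).
Proof. by []. Qed.

Lemma size_shw u v w : w \in shw u v -> size w = (size u + size v)%N.
Proof.
elim: u v w => [|a u IHu] v w; first by rewrite inE => /eqP ->.
elim: v w => [|b v IHv] w; first by rewrite shw_nilr inE addn0 => /eqP ->.
rewrite shw_cons mem_cat => /orP[] /mapP[w' Hw' ->] /=.
  by rewrite (IHu _ _ Hw') addSn.
by rewrite (IHv _ Hw') addnS.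
Qed.

Lemma count_shw_eq0 eta u v :
  (size u + size v != size eta)%N -> count_mem eta (shw u v) = 0%N.
Proof. by move=> Hs; apply/count_memPn; apply: contra Hs => /size_shw ->. Qed.

Lemma count_map_cons e eta a (L : seq (word m)) :
  count_mem (e :: eta) (map (cons a) L) = ((a == e) * count_mem eta L)%N.
Proof.
elim: L => [|w L IH] /=; first by rewrite muln0.
rewrite IH eqseq_cons mulnDr; congr (_ + _)%N.
by case: (a == e); rewrite ?mul1n ?mul0n.
Qed.

Lemma count_shw_cons e eta a u b v :
  count_mem (e :: eta) (shw (a :: u) (b :: v)) =
  ((a == e) * count_mem eta (shw u (b :: v)) + (b == e) * count_mem eta (shw (a :: u) v))%N.
Proof. by rewrite shw_cons count_cat !count_map_cons. Qed.

Lemma big_tupleS n (F : n.+1.-tuple letter -> nat) :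
  (\sum_(t : n.+1.-tuple letter) F t =
   \sum_(a : letter) \sum_(t : n.-tuple letter) F [tuple of a :: t])%N.
Proof.
rewrite pair_big /= (reindex (fun p : letter * n.-tuple letter => [tuple of p.1 :: p.2])) //=.
exists (fun t : n.+1.-tuple letter => (thead t, [tuple of behead t])).
  by move=> [a t] _ /=; rewrite theadE; congr (_, _); apply: val_inj.
by move=> t _; rewrite [RHS]tuple_eta; apply: val_inj.
Qed.

Lemma big_tuple0 (R : nmodType) (F : 0.-tuple letter -> R) :
  \sum_(t : 0.-tuple letter) F t = F [tuple].
Proof. by rewrite (big_pred1 [tuple]) // => t; rewrite /= [t]tuple0; apply/esym/eqP. Qed.

Lemma sum_tuple_eq j eta :
  (\sum_(v : j.-tuple letter) (tval v == eta) = (j == size eta))%N.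
Proof.
have [Hs|Hs] := eqVneq (size eta) j.
  have Hs' : size eta == j by rewrite Hs.
  rewrite (bigD1 (Tuple Hs')) //= eqxx big1 ?Hs ?eqxx // => v Hv.
  by apply/eqP; rewrite eqb0; apply: contra Hv => /eqP Ev; apply/eqP/val_inj.
rewrite big1 // => v _.
by apply/eqP; rewrite eqb0; apply: contra Hs => /eqP <-; rewrite size_tuple.
Qed.

Lemma sum_count_shw_cons e eta i j :
  (\sum_(u : i.+1.-tuple letter) \sum_(v : j.+1.-tuple letter) count_mem (e :: eta) (shw u v) =
   \sum_(u : i.-tuple letter) \sum_(v : j.+1.-tuple letter) count_mem eta (shw u v) +
   \sum_(u : i.+1.-tuple letter) \sum_(v : j.-tuple letter) count_mem eta (shw u v))%N.
Proof.
rewrite big_tupleS; under eq_bigr do under eq_bigr do rewrite big_tupleS.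
have shw_tuple a (u : i.-tuple letter) b (v : j.-tuple letter) :
  shw [tuple of a :: u] [tuple of b :: v] = shw (a :: u) (b :: v) by [].
under eq_bigr do under eq_bigr do under eq_bigr do under eq_bigr do
  rewrite shw_tuple count_shw_cons.
under eq_bigr do under eq_bigr do under eq_bigr do rewrite big_split.
under eq_bigr do under eq_bigr do rewrite big_split.
under eq_bigr do rewrite big_split.
rewrite big_split /=; congr (_ + _)%N.
  rewrite (bigD1 e) //= [X in (_ + X)%N]big1 ?addn0 => [|a /negPf Ha]; last first.
    by apply: big1 => u _; apply: big1 => b _; apply: big1 => v _; rewrite Ha.
  apply: eq_bigr => u _; rewrite big_tupleS; apply: eq_bigr => b _; apply: eq_bigr => v _.
  by rewrite eqxx mul1n.
rewrite big_tupleS; apply: eq_bigr => a _; apply: eq_bigr => u _.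
rewrite (bigD1 e) //= [X in (_ + X)%N]big1 ?addn0 => [|b /negPf Hb]; last first.
  by apply: big1 => v _; rewrite Hb.
by apply: eq_bigr => v _; rewrite eqxx mul1n.
Qed.

Lemma sum_count_shw eta i j :
  (\sum_(u : i.-tuple letter) \sum_(v : j.-tuple letter) count_mem eta (shw u v) =
   if i + j == size eta then 'C(i + j, i) else 0)%N.
Proof.
elim: eta i j => [|e eta IH] [|i] j.
- rewrite big_tuple0 /=; under eq_bigr do rewrite addn0.
  by rewrite sum_tuple_eq bin0 eq_sym.
- rewrite addSn /=; apply: big1 => u _; apply: big1 => v _; apply: count_shw_eq0.
  by rewrite !size_tuple.
- rewrite big_tuple0 /=; under eq_bigr do rewrite addn0.
  by rewrite sum_tuple_eq bin0 eq_sym.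
case: j => [|j].
  rewrite addn0 binn; under eq_bigr do rewrite big_tuple0 shw_nilr /= addn0.
  by rewrite sum_tuple_eq eq_sym.
rewrite sum_count_shw_cons !IH !addnS !addSn eqSS; case: ifP => // _.
by rewrite [in RHS]binS addnC.
Qed.
End ShuffleCount.

Section ShuffleAlgebra.
Variables (K : numFieldType) (m : nat).
Local Notation letter := 'I_m.+1.
Local Notation series := (series K m).
Local Notation one := (@Defs.one K m).
Implicit Types (a b c d x : series) (eta : word m).

Lemma sum_tuple_count j eta (F : word m -> K) : size eta = j ->
  \sum_(v : j.-tuple letter) F v * (count_mem eta [:: tval v])%:R = F eta.
Proof.
move=> Hs; have Hs' : size eta == j by rewrite Hs.
rewrite (bigD1 (Tuple Hs')) //= eqxx /= big1 ?addr0 ?mulr1 // => v Hv.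
rewrite /= addn0; case: eqP => [Ev|]; last by rewrite mulr0.
by case/eqP: Hv; apply/val_inj; rewrite /= Ev.
Qed.

Lemma shuffle_recl a b eta : shuffle a b eta = a [::] * b eta +
  \sum_(i < size eta) \sum_(u : i.+1.-tuple letter) \sum_(v : (size eta - i.+1).-tuple letter)
      a u * b v * (count_mem eta (shw u v))%:R.
Proof.
rewrite /shuffle big_ord_recl big_tuple0 subn0; congr (_ + _).
by under eq_bigr do rewrite -mulrA; rewrite -mulr_sumr sum_tuple_count.
Qed.

Lemma shuffle_lowr a b eta : (forall v, (size v < size eta)%N -> b v = 0) ->
  shuffle a b eta = a [::] * b eta.
Proof.
move=> Hb; rewrite shuffle_recl big1 ?addr0 // => i _.
apply: big1 => u _; apply: big1 => v _; rewrite Hb ?mulr0 ?mul0r // size_tuple.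
by have := ltn_ord i; lia.
Qed.

Lemma shuffle1l b eta : shuffle one b eta = b eta.
Proof.
rewrite shuffle_recl mul1r big1 ?addr0 // => i _.
by apply: big1 => -[[|x u] Hu] _ //; apply: big1 => v _; rewrite !mul0r.
Qed.

Lemma eq_shuffle a1 a2 b1 b2 eta :
  (forall u, (size u <= size eta)%N -> a1 u = a2 u) ->
  (forall v, (size v <= size eta)%N -> b1 v = b2 v) ->
  shuffle a1 b1 eta = shuffle a2 b2 eta.
Proof.
move=> Ha Hb; apply: eq_bigr => i _; apply: eq_bigr => u _; apply: eq_bigr => v _.
by rewrite Ha ?Hb // size_tuple ?leq_subr // -ltnS.
Qed.

Lemma shuffle_sumr a N (F : nat -> series) eta :
  shuffle a (fun v => \sum_(k < N) F k v) eta = \sum_(k < N) shuffle a (F k) eta.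
Proof.
rewrite /shuffle.
under eq_bigr do under eq_bigr do under eq_bigr do rewrite mulr_sumr mulr_suml.
under eq_bigr do under eq_bigr do rewrite exchange_big.
under eq_bigr do rewrite exchange_big.
by rewrite exchange_big.
Qed.

Lemma shuffleBl a1 a2 b eta :
  shuffle (fun u => a1 u - a2 u) b eta = shuffle a1 b eta - shuffle a2 b eta.
Proof.
rewrite /shuffle -sumrB; apply: eq_bigr => i _; rewrite -sumrB; apply: eq_bigr => u _.
by rewrite -sumrB; apply: eq_bigr => v _; rewrite !mulrBl.
Qed.

Lemma shuffleBr a b1 b2 eta :
  shuffle a (fun v => b1 v - b2 v) eta = shuffle a b1 eta - shuffle a b2 eta.
Proof.
rewrite /shuffle -sumrB; apply: eq_bigr => i _; rewrite -sumrB; apply: eq_bigr => u _.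
by rewrite -sumrB; apply: eq_bigr => v _; rewrite mulrBr mulrBl.
Qed.

Lemma shuffleZl (k : K) a b eta : shuffle (fun u => k * a u) b eta = k * shuffle a b eta.
Proof.
rewrite /shuffle mulr_sumr; apply: eq_bigr => i _; rewrite mulr_sumr; apply: eq_bigr => u _.
by rewrite mulr_sumr; apply: eq_bigr => v _; rewrite !mulrA.
Qed.

Lemma shuffleZr (k : K) a b eta : shuffle a (fun v => k * b v) eta = k * shuffle a b eta.
Proof.
rewrite /shuffle mulr_sumr; apply: eq_bigr => i _; rewrite mulr_sumr; apply: eq_bigr => u _.
by rewrite mulr_sumr; apply: eq_bigr => v _; rewrite !mulrA [a u * k]mulrC.
Qed.

Lemma shpow_eq0 x : x [::] = 0 -> forall k eta, (size eta < k)%N -> shpow x k eta = 0.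
Proof.
move=> x0; elim=> [|k IH] eta //= Hk.
apply: big1 => -[[|i] Hi] _; apply: big1 => u _; apply: big1 => v _.
  by rewrite (tuple0 u) /= x0 !mul0r.
by rewrite IH ?mulr0 ?mul0r // size_tuple /=; lia.
Qed.

End ShuffleAlgebra.

Lemma sum_ord_widen_eq0 (R : nmodType) (F : nat -> R) n1 n2 :
  (forall k, (n1 <= k)%N -> F k = 0) -> (n1 <= n2)%N ->
  \sum_(k < n2) F k = \sum_(k < n1) F k.
Proof.
move=> F0 le12; rewrite (big_ord_widen n2 F le12) [RHS]big_mkcond; apply: eq_bigr => k _.
by case: ltnP => // /F0.
Qed.

Lemma sum_ord_prefix_le (R : numDomainType) (F : nat -> R) j N :
  (forall p, 0 <= F p) -> (j <= N)%N -> \sum_(p < j) F p <= \sum_(p < N) F p.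
Proof.
move=> F0 le_jN; rewrite (big_ord_widen N F le_jN) [leLHS]big_mkcond.
by apply: ler_sum => p _; case: ifP.
Qed.

Section ShuffleInverse.
Variables (K : numFieldType) (m : nat).
Local Notation series := (series K m).
Local Notation one := (@Defs.one K m).
Implicit Types (c d : series) (eta : word m).

Lemma LCunit_coef0 c : LCunit c -> c [::] != 0.
Proof.
move=> [_ [d [_ [cd1 _]]]]; apply: contra_eq_neq (congr1 (fun f => f [::]) cd1) => c0.
by rewrite shuffle_lowr // c0 mul0r /= eq_sym oner_neq0.
Qed.

Lemma cprime_coef0 c : c [::] != 0 -> cprime c [::] = 0.
Proof. by move=> c0; rewrite /cprime /addS /oppS /scaleS /= mulVf // subrr. Qed.

Lemma cprimeK c : c [::] != 0 -> forall u, c u = c [::] * (one u - cprime c u).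
Proof.
move=> c0 u; rewrite /cprime /addS /oppS /scaleS opprD addrA subrr add0r opprK.
by rewrite mulrA mulfV // mul1r.
Qed.

(* With c = c_0 (1 - c'), the sum telescopes: (1 - c') ш sum_(k <= n) c'^k = 1 - c'^(n+1). *)
Lemma shuffle_shinvr c : c [::] != 0 -> forall eta, shuffle c (shinv c) eta = one eta.
Proof.
move=> c0 eta; set c' := cprime c; set n := size eta.
have c'_low := shpow_eq0 (cprime_coef0 c0).
rewrite (@eq_shuffle _ _ c (fun u => c [::] * (one u - c' u)) (shinv c)
   (fun v => (c [::])^-1 * \sum_(k < n.+1) shpow c' k v)); first last.
- move=> v Hv; congr (_ * _); apply/esym/(sum_ord_widen_eq0 (F := shpow c' ^~ v)) => // k.
  exact: c'_low.
- by move=> u _; rewrite -cprimeK.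
rewrite shuffleZl shuffleBl !shuffleZr shuffle1l shuffle_sumr -mulrBr mulrA mulfV // mul1r.
rewrite big_ord_recl [X in _ - X]big_ord_recr /=; under eq_bigr do rewrite add0n.
by rewrite opprD addrA addrK [X in _ - X](c'_low n.+1 eta (ltnSn n)) subr0.
Qed.

Lemma shuffle_cancel c d1 d2 : c [::] != 0 ->
  (forall eta, shuffle c d1 eta = shuffle c d2 eta) -> forall eta, d1 eta = d2 eta.
Proof.
move=> c0 Hs; suff : forall n eta, (size eta <= n)%N -> d1 eta - d2 eta = 0.
  by move=> S eta; apply/eqP; rewrite -subr_eq0; apply/eqP/(S (size eta)).
elim=> [|n IH] eta Hn; have /eqP := Hs eta;
  rewrite -subr_eq0 -shuffleBr shuffle_lowr ?mulf_eq0 ?(negPf c0) => [/eqP //|v Hv].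
- by move: (leq_trans Hv Hn).
- by apply: IH; rewrite -ltnS (leq_trans Hv).
Qed.

Lemma shinv_unique c d : c [::] != 0 -> shuffle c d = one -> shinv c = d.
Proof.
move=> c0 cd1; apply: funext; apply: (shuffle_cancel c0) => eta.
by rewrite shuffle_shinvr // cd1.
Qed.

Lemma shpow_cprime_eq0 c : LCunit c -> forall eta k, (size eta < k)%N ->
  shpow (cprime c) k eta = 0.
Proof. by move=> /LCunit_coef0 c0 eta k; apply/shpow_eq0/cprime_coef0. Qed.

Lemma LCunit_shinv c : LCunit c -> LCunit (shinv c).
Proof.
move=> Uc; have [Lc [d [Ld [cd1 dc1]]]] := Uc.
by rewrite (shinv_unique (LCunit_coef0 Uc) cd1); split => //; exists c.
Qed.

End ShuffleInverse.

Section Estimates.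
Variables (K : numFieldType) (m : nat).
Local Notation letter := 'I_m.+1.
Local Notation series := (series K m).
Implicit Types (a b x z : series) (M r s : K).

Lemma normM_le_ge0 M a r : normM_le M a r -> 0 <= r.
Proof. by move=> H; have := H [::]; rewrite /= expr0 !mulr1; apply: le_trans. Qed.

Lemma normM_le_ler M a r r' : 0 <= M -> r <= r' -> normM_le M a r -> normM_le M a r'.
Proof.
move=> M0 le_r H eta; apply: le_trans (H eta) _.
by rewrite ler_wpM2r // ler_wpM2r // exprn_ge0.
Qed.

Lemma normM_le0_eq0 M a eta : normM_le M a 0 -> a eta = 0.
Proof. by move=> Ha; have := Ha eta; rewrite !mul0r normr_le0 => /eqP. Qed.

Lemma normM_le_lerM M M' a r : 0 <= M -> M <= M' -> normM_le M a r -> normM_le M' a r.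
Proof.
move=> M0 le_M H eta; apply: le_trans (H eta) _.
rewrite ler_wpM2r // ler_wpM2l ?(normM_le_ge0 H) //.
by apply: lerXn2r; rewrite ?nnegrE // (le_trans M0).
Qed.

Lemma normM_leD M a b r1 r2 : normM_le M a r1 -> normM_le M b r2 ->
  normM_le M (fun eta => a eta + b eta) (r1 + r2).
Proof.
move=> Ha Hb eta; apply: le_trans (ler_normD _ _) _.
by rewrite !mulrDl lerD.
Qed.

Lemma normM_le_sum M N (a : nat -> series) (r : nat -> K) :
  (forall p, (p < N)%N -> normM_le M (a p) (r p)) ->
  normM_le M (fun eta => \sum_(p < N) a p eta) (\sum_(p < N) r p).
Proof.
move=> H eta; apply: le_trans (ler_norm_sum _ _ _) _.
by rewrite !mulr_suml; apply: ler_sum => p _; exact: (H p (ltn_ord p) eta).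
Qed.

Lemma normM_leZ M a r (k : K) : normM_le M a r -> normM_le M (scaleS k a) (`|k| * r).
Proof. by move=> H eta; rewrite /scaleS normrM -!mulrA ler_wpM2l // mulrA; apply: H. Qed.

Lemma normM_le_cst0 M r : 0 <= M -> 0 <= r -> normM_le M (fun _ : word m => 0) r.
Proof. by move=> M0 r0 eta; rewrite normr0 mulr_ge0 // mulr_ge0 // exprn_ge0. Qed.

Lemma normM_le_one M : 0 <= M -> normM_le M (@Defs.one K m) 1.
Proof.
move=> M0 [|e eta] /=; first by rewrite normr1 !mul1r.
by rewrite normr0 mul1r mulr_ge0 // exprn_ge0.
Qed.

Definition coef_le a (p : nat -> K) :=
  forall eta : word m, `|a eta| <= p (size eta) * (size eta)`!%:R.

Lemma coef_le_shuffle a b (p q : nat -> K) :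
  (forall n, 0 <= p n) -> (forall n, 0 <= q n) -> coef_le a p -> coef_le b q ->
  coef_le (shuffle a b) (fun n => \sum_(i < n.+1) p i * q (n - i)%N).
Proof.
move=> p0 q0 Ha Hb eta; set n := size eta.
rewrite /shuffle; apply: le_trans (ler_norm_sum _ _ _) _.
rewrite mulr_suml; apply: ler_sum => i _; apply: le_trans (ler_norm_sum _ _ _) _.
set X := p i * q (n - i)%N * (i`! * (n - i)`!)%:R.
have X0 : 0 <= X by rewrite !mulr_ge0.
apply: (@le_trans _ _ (\sum_(u : i.-tuple letter) \sum_(v : (n - i).-tuple letter)
     X * (count_mem eta (shw u v))%:R)).
  apply: ler_sum => u _; apply: le_trans (ler_norm_sum _ _ _) _; apply: ler_sum => v _.
  rewrite !normrM normr_nat ler_wpM2r // /X natrM mulrACA.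
  by apply: ler_pM => //; [have := Ha u | have := Hb v]; rewrite size_tuple.
under eq_bigr do rewrite -mulr_sumr -natr_sum.
have le_in : (i <= n)%N by rewrite -ltnS.
by rewrite -mulr_sumr -natr_sum sum_count_shw subnKC // eqxx /X -mulrA -natrM mulnC bin_fact.
Qed.

Lemma sum_expr_le (b : K) n : 1 < b -> \sum_(i < n) b ^+ (n.-1 - i) <= b ^+ n / (b - 1).
Proof.
move=> b1; have := subrXX b 1 n; rewrite expr1n.
under eq_bigr do rewrite expr1n mulr1.
by move=> E; rewrite ler_pdivlMr ?subr_gt0 // mulrC -E gerBl.
Qed.

(* The Cauchy product of r M^i (i >= 1) with rho (be M)^(n-i) is a geometric sum in be. *)
Lemma normM_le_shuffle a b M r be rho : 0 < M -> 1 < be -> 0 <= r -> 0 <= rho ->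
  a [::] = 0 -> normM_le M a r -> normM_le (be * M) b rho ->
  normM_le (be * M) (shuffle a b) (r / (be - 1) * rho).
Proof.
move=> M0 be1 r0 rho0 a0 Ha Hb.
have be0 : 0 < be := lt_trans ltr01 be1.
pose p i := if i == 0%N then 0 else r * M ^+ i.
pose q n := rho * (be * M) ^+ n.
have p0 n : 0 <= p n by case: n => [|n]; rewrite /p //= mulr_ge0 // exprn_ge0 // ltW.
have q0 n : 0 <= q n by rewrite /q mulr_ge0 // exprn_ge0 // ltW // mulr_gt0.
have Hp : coef_le a p by move=> [|e eta]; [rewrite a0 normr0 /p /= mul0r | exact: Ha].
move=> eta; apply: le_trans (coef_le_shuffle p0 q0 Hp Hb eta) _.
rewrite ler_wpM2r //; set n := size eta.
rewrite big_ord_recl /p /= mul0r add0r.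
have E (i : 'I_n) : r * M ^+ (bump 0 i) * q (n - bump 0 i)%N =
    r * rho * M ^+ n * be ^+ (n.-1 - i).
  have Hi := ltn_ord i; rewrite /bump /= add1n /q exprMn.
  have -> : (n - i.+1 = n.-1 - i)%N by lia.
  have -> : M ^+ n = M ^+ i.+1 * M ^+ (n.-1 - i) by rewrite -exprD; congr (_ ^+ _); lia.
  ring.
rewrite (eq_bigr _ (fun i _ => E i)) -mulr_sumr.
have -> : r / (be - 1) * rho * (be * M) ^+ n = r * rho * M ^+ n * (be ^+ n / (be - 1)).
  by rewrite exprMn; ring.
by rewrite ler_wpM2l ?sum_expr_le // !mulr_ge0 ?exprn_ge0 // ltW.
Qed.

(* With be = 1 + 4 r each extra shuffle factor of M-norm at most r divides the
   (be M)-norm by 4. *)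
Lemma normM_le_shpow x M r : 0 < M -> 0 < r -> x [::] = 0 -> normM_le M x r ->
  forall k, normM_le ((1 + 4 * r) * M) (shpow x k) (4^-1 ^+ k).
Proof.
move=> M0 r0 x0 Hx; have be1 : 1 < 1 + 4 * r by rewrite ltrDl mulr_gt0.
elim=> [|k IH] /=.
  by rewrite expr0; apply: normM_le_one; rewrite ltW // mulr_gt0 // (lt_trans _ be1).
have := normM_le_shuffle M0 be1 (ltW r0) _ x0 Hx IH; rewrite exprn_ge0 ?invr_ge0 ?ler0n //.
have -> : r / (1 + 4 * r - 1) * 4^-1 ^+ k = 4^-1 ^+ k.+1.
  by rewrite exprS addrAC subrr add0r; field; rewrite gt_eqF.
by apply.
Qed.

Lemma normM_le_shpowB x z M r s : 0 < M -> 0 < r -> 0 <= s ->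
  x [::] = 0 -> z [::] = 0 -> normM_le M x r -> normM_le M z r ->
  normM_le M (fun u => z u - x u) s ->
  forall k, normM_le ((1 + 4 * r) * M) (fun eta => shpow z k eta - shpow x k eta)
                     (s / r * 2^-1 ^+ k).
Proof.
move=> M0 r0 s0 x0 z0 Hx Hz Hd; have be1 : 1 < 1 + 4 * r by rewrite ltrDl mulr_gt0.
have bM0 : 0 <= (1 + 4 * r) * M by rewrite ltW // mulr_gt0 // (lt_trans _ be1).
have sr0 : 0 <= s / r by rewrite divr_ge0 // ltW.
elim=> [|k IH].
  by move=> eta /=; rewrite subrr normr0 expr0 mulr1 !mulr_ge0 ?exprn_ge0 ?ler0n ?invr_ge0 // ltW.
have q4 : 0 <= (4^-1 : K) ^+ k by rewrite exprn_ge0 // invr_ge0 ler0n.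
have q2 : 0 <= s / r * (2^-1 : K) ^+ k by rewrite mulr_ge0 // exprn_ge0 // invr_ge0 ler0n.
have d0 : (fun u => z u - x u) [::] = 0 by rewrite /= x0 z0 subrr.
have HA := normM_le_shuffle M0 be1 s0 q4 d0 Hd (normM_le_shpow M0 r0 z0 Hz k).
have HB := normM_le_shuffle M0 be1 (ltW r0) q2 x0 Hx IH.
have E : (fun eta => shpow z k.+1 eta - shpow x k.+1 eta) =
   fun eta => shuffle (fun u => z u - x u) (shpow z k) eta +
              shuffle x (fun eta => shpow z k eta - shpow x k eta) eta.
  by apply: funext => eta /=; rewrite shuffleBl shuffleBr addrA subrK.
rewrite E; apply: normM_le_ler (normM_leD HA HB) => //.
rewrite addrAC subrr add0r exprS.
have -> : s / (4 * r) * 4^-1 ^+ k = s / r * 4^-1 * 4^-1 ^+ k by field; rewrite gt_eqF.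
have -> : r / (4 * r) * (s / r * 2^-1 ^+ k) = s / r * 4^-1 * 2^-1 ^+ k.
  by field; rewrite gt_eqF.
have -> : s / r * (2^-1 * 2^-1 ^+ k) = s / r * 4^-1 * 2^-1 ^+ k + s / r * 4^-1 * 2^-1 ^+ k.
  by field; rewrite gt_eqF.
rewrite lerD // ler_wpM2l ?mulr_ge0 ?invr_ge0 ?ler0n ?(ltW r0) //.
apply: lerXn2r; rewrite ?nnegrE ?invr_ge0 ?ler0n //.
by rewrite lef_pV2 ?posrE ?ltr0n ?ler_nat.
Qed.

End Estimates.

Section ShinvLipschitz.
Variables (K : numFieldType) (m : nat).
Local Notation series := (series K m).
Implicit Types (c x z : series) (M C g t : K).

Lemma sum_halfpow_le2 N : \sum_(k < N) (2^-1 : K) ^+ k <= 2.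
Proof.
suff -> : \sum_(k < N) (2^-1 : K) ^+ k = 2 - 2 * 2^-1 ^+ N.
  by rewrite gerBl mulr_ge0 // exprn_ge0 // invr_ge0 ler0n.
elim: N => [|N IH]; first by rewrite big_ord0 expr0 mulr1 subrr.
by rewrite big_ord_recr /= IH exprS; field.
Qed.

Lemma normfV_le g (y : K) : 0 < g -> g <= `|y| -> `|y^-1| <= g^-1.
Proof. by move=> g0 gy; rewrite normfV lef_pV2 // posrE (lt_le_trans g0). Qed.

Lemma normfVB_le g (y y' : K) : 0 < g -> g <= `|y| -> g <= `|y'| ->
  `|y^-1 - y'^-1| <= `|y' - y| / g ^+ 2.
Proof.
move=> g0 gy gy'; have [y0 y'0] : y != 0 /\ y' != 0.
  by split; rewrite -normr_gt0 (lt_le_trans g0).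
rewrite (_ : y^-1 - y'^-1 = (y' - y) * (y^-1 * y'^-1)); last by field; rewrite ?y0 ?y'0.
rewrite normrM ler_wpM2l // expr2 invfM normrM.
by apply: ler_pM => //; exact: normfV_le.
Qed.

Lemma normM_le_cprime c M C g : 0 <= M -> 0 < C -> 0 < g -> g <= `|c [::]| ->
  normM_le M c C -> normM_le M (cprime c) (C / g).
Proof.
move=> M0 C0 g0 gc Hc; have c0 : c [::] != 0 by rewrite -normr_gt0 (lt_le_trans g0).
move=> [|e eta].
  by rewrite cprime_coef0 // normr0 /= expr0 !mulr1 divr_ge0 // ltW.
rewrite /cprime /addS /oppS /scaleS /= add0r normrN normrM.
apply: le_trans (ler_pM _ _ (normfV_le g0 gc) (Hc (e :: eta))) _ => //.
by rewrite [_ / g]mulrC -!mulrA.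
Qed.

Lemma normM_le_cprimeB x z M C g t : 0 < g -> g <= `|x [::]| -> g <= `|z [::]| ->
  normM_le M x C -> normM_le M (fun u => z u - x u) t ->
  normM_le M (fun u => cprime z u - cprime x u) (t * (C / g ^+ 2 + g^-1)).
Proof.
move=> g0 gx gz Hx Hd; have [x0 z0] : x [::] != 0 /\ z [::] != 0.
  by split; rewrite -normr_gt0 (lt_le_trans g0).
have t0 := normM_le_ge0 Hd; have C0 := normM_le_ge0 Hx.
have Hinv : `|(x [::])^-1 - (z [::])^-1| <= t / g ^+ 2.
  apply: le_trans (normfVB_le g0 gx gz) _; rewrite ler_wpM2r ?invr_ge0 ?exprn_ge0 ?(ltW g0) //.
  by have := Hd [::]; rewrite /= expr0 !mulr1.
move=> [|e eta].
  rewrite !cprime_coef0 // subrr normr0 /= expr0 !mulr1.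
  by rewrite mulr_ge0 // addr_ge0 ?divr_ge0 ?exprn_ge0 ?invr_ge0 // ltW.
rewrite /cprime /addS /oppS /scaleS /= !add0r opprK.
set xe := x (e :: eta); set ze := z (e :: eta); rewrite -[leRHS]mulrA; set W := M ^+ _ * _.
rewrite (_ : - ((z [::])^-1 * ze) + (x [::])^-1 * xe =
   ((x [::])^-1 - (z [::])^-1) * xe - (z [::])^-1 * (ze - xe)); last by ring.
apply: le_trans (ler_normB _ _) _; rewrite !normrM.
rewrite (_ : _ * W = t / g ^+ 2 * (C * W) + g^-1 * (t * W)); last by rewrite /W; ring.
apply: lerD; apply: ler_pM => //; rewrite /W ?mulrA; [exact: Hx | exact: normfV_le | exact: Hd].
Qed.

Definition shinv_lip C g : K := 4 / g ^+ 2 + 2 / (C * g).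

Lemma normM_le_shinvB M C g t x z : 0 < M -> 0 < C -> 0 < g ->
  normM_le M x C -> normM_le M z C -> normM_le M (fun u => z u - x u) t ->
  g <= `|x [::]| -> g <= `|z [::]| ->
  normM_le ((1 + 4 * (C / g)) * M) (fun eta => shinv z eta - shinv x eta) (t * shinv_lip C g).
Proof.
move=> M0 C0 g0 Hx Hz Hd gx gz.
have [x0 z0] : x [::] != 0 /\ z [::] != 0 by split; rewrite -normr_gt0 (lt_le_trans g0).
have t0 := normM_le_ge0 Hd.
set r := C / g; have r0 : 0 < r by rewrite divr_gt0.
set s := t * (C / g ^+ 2 + g^-1).
have s0 : 0 <= s by rewrite mulr_ge0 // addr_ge0 ?divr_ge0 ?exprn_ge0 ?invr_ge0 // ltW.
set B := (1 + 4 * r) * M.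
have B0 : 0 <= B by rewrite ltW // mulr_gt0 // ltr_wpDr // mulr_ge0 // ltW.
have Hx' := normM_le_cprime (ltW M0) C0 g0 gx Hx.
have Hz' := normM_le_cprime (ltW M0) C0 g0 gz Hz.
have HZ k : normM_le B (shpow (cprime z) k) (2^-1 ^+ k).
  apply: normM_le_ler (normM_le_shpow M0 r0 (cprime_coef0 z0) Hz' k) => //.
  apply: lerXn2r; rewrite ?nnegrE ?invr_ge0 ?ler0n //.
  by rewrite lef_pV2 ?posrE ?ltr0n ?ler_nat.
have HD := normM_le_shpowB M0 r0 s0 (cprime_coef0 x0) (cprime_coef0 z0) Hx' Hz'
  (normM_le_cprimeB g0 gx gz Hx Hd).
move=> eta; set n := size eta; set W := B ^+ n * n`!%:R.
have W0 : 0 <= W by rewrite mulr_ge0 // exprn_ge0.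
have SZ : `|\sum_(k < n.+1) shpow (cprime z) k eta| <= 2 * W.
  apply: le_trans (normM_le_sum (N := n.+1) (fun k _ => HZ k) eta) _.
  by rewrite -mulrA ler_wpM2r // sum_halfpow_le2.
have SD : `|\sum_(k < n.+1) (shpow (cprime z) k eta - shpow (cprime x) k eta)|
          <= s / r * (2 * W).
  apply: le_trans (normM_le_sum (N := n.+1) (fun k _ => HD k) eta) _.
  by rewrite -mulr_sumr -2!mulrA ler_wpM2l ?(divr_ge0 s0 (ltW r0)) // ler_wpM2r // sum_halfpow_le2.
rewrite /shinv /= -/n (_ : _ * _ - _ * _ =
   ((z [::])^-1 - (x [::])^-1) * (\sum_(k < n.+1) shpow (cprime z) k eta) +
   (x [::])^-1 * (\sum_(k < n.+1) (shpow (cprime z) k eta - shpow (cprime x) k eta)));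
  last by rewrite sumrB; ring.
apply: le_trans (ler_normD _ _) _; rewrite !normrM.
apply: le_trans (lerD (ler_pM _ _ (normfVB_le g0 gz gx) SZ)
                      (ler_pM _ _ (normfV_le g0 gx) SD)) _ => //.
have -> : t * shinv_lip C g * B ^+ n * n`!%:R = t / g ^+ 2 * (2 * W) + g^-1 * (s / r * (2 * W)).
  by rewrite /shinv_lip /W /s /r; field; rewrite ?gt_eqF.
rewrite lerD2r ler_wpM2r ?mulr_ge0 ?exprn_ge0 //.
rewrite ler_wpM2r ?invr_ge0 ?exprn_ge0 ?(ltW g0) // distrC.
by have := Hd [::]; rewrite /= expr0 !mulr1.
Qed.

End ShinvLipschitz.

Section SilvaTopology.
Variables (K : numFieldType) (m : nat).
Local Notation series := (series K m).
Implicit Types (a b c d v w : series) (V W : series -> Prop).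

Definition abs_convex V : Prop :=
  forall c d (k l : K), V c -> V d -> `|k| + `|l| <= 1 -> V (addS (scaleS k c) (scaleS l d)).

Lemma LC_comb a b (k l : K) : LC a -> LC b -> LC (addS (scaleS k a) (scaleS l b)).
Proof.
move=> [Ma [Ma0 [ra Ha]]] [Mb [Mb0 [rb Hb]]].
exists (Ma + Mb); split; first by rewrite addr_gt0.
exists (`|k| * ra + `|l| * rb); apply: normM_leD; apply: normM_leZ.
  by apply: (normM_le_lerM (ltW Ma0) _ Ha); rewrite lerDl ltW.
by apply: (normM_le_lerM (ltW Mb0) _ Hb); rewrite lerDr ltW.
Qed.

Lemma LC_add a b : LC a -> LC b -> LC (addS a b).
Proof.
move=> La Lb; have := LC_comb 1 1 La Lb; congr LC; apply: funext => eta.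
by rewrite /addS /scaleS !mul1r.
Qed.

Lemma LC_scale2 v : LC (scaleS 2 v) -> LC v.
Proof.
move=> Lv; have := LC_comb 2^-1 0 Lv Lv; congr LC; apply: funext => eta.
by rewrite /addS /scaleS mul0r addr0 mulrA mulVf ?pnatr_eq0 // mul1r.
Qed.

Lemma zero_nbhd0 V : silva_zero_nbhd V -> V (fun _ => 0).
Proof.
move=> [_ [_ Vball]]; have [r r0 Hr] := Vball 1 ltr01; apply: Hr.
exact: normM_le_cst0 ler01 (ltW r0).
Qed.

Lemma zero_nbhd_halfD V v v' : silva_zero_nbhd V ->
  V (scaleS 2 v) -> V (scaleS 2 v') -> V (addS v v').
Proof.
move=> [_ [Vconv _]] Vv Vv'.
have half : `|(2^-1 : K)| + `|(2^-1 : K)| <= 1.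
  have E : (2^-1 : K) + 2^-1 = 1 by field.
  by rewrite ger0_norm ?invr_ge0 ?ler0n // E.
have := Vconv _ _ _ _ Vv Vv' half; congr V; apply: funext => eta.
by rewrite /addS /scaleS !mulrA mulVf ?pnatr_eq0 // !mul1r.
Qed.

Lemma zero_nbhd_scale2 V : silva_zero_nbhd V -> silva_zero_nbhd (fun v => V (scaleS 2 v)).
Proof.
move=> [VLC [Vconv Vball]]; split; [|split].
- by move=> v /VLC /LC_scale2.
- move=> a b k l Va Vb kl; have := Vconv _ _ _ _ Va Vb kl; congr V.
  by apply: funext => eta; rewrite /addS /scaleS; ring.
- move=> M M0; have [r r0 Hr] := Vball M M0; exists (r / 2); first by rewrite divr_gt0.
  move=> v Hv; apply: Hr; have := normM_leZ 2 Hv.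
  by rewrite normr_nat mulrC divfK ?pnatr_eq0.
Qed.

(* The witness is the interior of c + W. *)
Lemma silva_open_nbhd W c : silva_zero_nbhd W -> LC c ->
  exists O, silva_open O /\ O c /\ forall d, O d -> W (fun eta => d eta - c eta).
Proof.
move=> HW Lc.
exists (fun d => LC d /\ exists2 V, silva_zero_nbhd V &
                                   forall v, V v -> W (fun eta => d eta + v eta - c eta)).
split; [split|split].
- by move=> d [].
- move=> d [Ld [V HV dVW]]; exists (fun v => V (scaleS 2 v)); split.
    exact: zero_nbhd_scale2.
  move=> v Vv; split; first by apply: LC_add => //; apply: LC_scale2; exact: HV.1 _ Vv.
  exists (fun v => V (scaleS 2 v)) => [|v' Vv']; first exact: zero_nbhd_scale2.
  have := dVW _ (zero_nbhd_halfD HV Vv Vv'); congr W.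
  by apply: funext => eta; rewrite /addS; ring.
- split => //; exists W => // v Wv.
  suff -> : (fun eta => c eta + v eta - c eta) = v by [].
  by apply: funext => eta; rewrite addrAC subrr add0r.
- move=> d [_ [V HV dVW]]; have := dVW _ (zero_nbhd0 HV); congr W.
  by apply: funext => eta; rewrite addr0.
Qed.

Lemma mulKf_dominated (S s y B : K) : 0 <= s -> s <= S -> `|y| <= s * B -> S * (S^-1 * y) = y.
Proof.
move=> s0 sS ys; have [S0|SN0] := eqVneq S 0; last by rewrite mulVKf.
have s00 : s = 0 by apply/le_anti; rewrite s0 -S0 sS.
by move: ys; rewrite s00 mul0r normr_le0 => /eqP ->; rewrite !mulr0.
Qed.

Lemma abs_convex_sum V (Mv eps : nat -> K) : abs_convex V ->
  (forall j d, normM_le (Mv j) d (eps j) -> V d) ->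
  (forall j, 0 < eps j) -> (forall j, 0 <= Mv j) ->
  forall N (b : nat -> series) (s : nat -> K), (forall j, 0 <= s j) ->
  (forall j, (j < N)%N -> normM_le (Mv j) (b j) (s j * eps j)) -> \sum_(j < N) s j <= 1 ->
  V (fun eta => \sum_(j < N) b j eta).
Proof.
move=> Vconv Vball eps0 Mv0; elim=> [|N IH] b s s0 Hb Hs.
  apply: (Vball 0%N); under [fun _ => _]funext do rewrite big_ord0.
  exact: normM_le_cst0 (ltW (eps0 _)).
set S := \sum_(j < N) s j; have S0 : 0 <= S by apply: sumr_ge0.
have sS j : (j < N)%N -> s j <= S.
  by move=> Hj; rewrite /S (bigD1 (Ordinal Hj)) //= lerDl sumr_ge0.
have Vx : V (fun eta => \sum_(j < N) S^-1 * b j eta).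
  apply: (IH (fun j eta => S^-1 * b j eta) (fun j => s j * S^-1)) => [j|j Hj|].
  - by rewrite mulr_ge0 // invr_ge0.
  - move=> eta; rewrite normrM ger0_norm ?invr_ge0 // [s j / S]mulrC -!mulrA.
    by rewrite ler_wpM2l ?invr_ge0 // !mulrA; apply: Hb; rewrite ltnS ltnW.
  - rewrite -mulr_suml -/S; have [->|SN0] := eqVneq S 0; first by rewrite mul0r ler01.
    by rewrite mulfV.
have Vy : V (fun eta => (s N)^-1 * b N eta).
  apply: (Vball N) => eta; rewrite normrM ger0_norm ?invr_ge0 //.
  have [sN0|sNN0] := eqVneq (s N) 0.
    by rewrite sN0 invr0 mul0r !mulr_ge0 ?exprn_ge0 // ltW.
  have sN_gt0 : 0 < s N by rewrite lt_def sNN0 s0.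
  by rewrite ler_pdivrMl // !mulrA; apply: Hb.
have SsN : `|S| + `|s N| <= 1 by rewrite !ger0_norm //; move: Hs; rewrite big_ord_recr.
have := Vconv _ _ _ _ Vx Vy SsN; congr V; apply: funext => eta.
rewrite /addS /scaleS big_ord_recr /= mulr_sumr; congr (_ + _).
  apply: eq_bigr => j _; have := Hb j (ltnW (ltn_ord j)) eta; rewrite -!mulrA.
  exact: mulKf_dominated (s0 j) (sS _ (ltn_ord j)).
by have := Hb N (ltnSn N) eta; rewrite -!mulrA; exact: mulKf_dominated (s0 N) (lexx _).
Qed.

End SilvaTopology.

Section HullOfBalls.
Variables (K : numFieldType) (m : nat).
Local Notation series := (series K m).
Variables (Mw dl : nat -> K).
Hypotheses (Mw_gt0 : forall p, 0 < Mw p) (Mw_homo : {homo Mw : p q / (p <= q)%N >-> p <= q})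
  (Mw_unbounded : forall M, 0 < M -> exists n, M <= Mw n) (dl_gt0 : forall p, 0 < dl p).

(* The absolutely convex hull of the balls of radius dl p in l_(Mw p), p >= 0. *)
Definition hull_balls (w : series) : Prop :=
  exists N (a : nat -> series) (t : nat -> K),
    [/\ forall p, 0 <= t p, forall p, normM_le (Mw p) (a p) (t p),
        forall p, (N <= p)%N -> t p = 0, \sum_(p < N) t p / dl p <= 1 &
        forall eta, w eta = \sum_(p < N) a p eta].

Lemma hull_balls_LC w : hull_balls w -> LC w.
Proof.
move=> [N [a [t [t0 Ha _ _ /funext ->]]]]; exists (Mw N); split => //.
exists (\sum_(p < N) t p); apply: normM_le_sum => p Hp.
exact: normM_le_lerM (ltW (Mw_gt0 p)) (Mw_homo (ltnW Hp)) (Ha p).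
Qed.

Lemma hull_balls_abs_convex : abs_convex hull_balls.
Proof.
move=> w1 w2 k l [N1 [a1 [t1 [t10 Ha1 t1N Hs1 Hw1]]]] [N2 [a2 [t2 [t20 Ha2 t2N Hs2 Hw2]]]] kl.
have a1N p eta : (N1 <= p)%N -> a1 p eta = 0.
  by move=> Hp; apply: (normM_le0_eq0 (M := Mw p)); rewrite -(t1N p Hp).
have a2N p eta : (N2 <= p)%N -> a2 p eta = 0.
  by move=> Hp; apply: (normM_le0_eq0 (M := Mw p)); rewrite -(t2N p Hp).
exists (maxn N1 N2), (fun p => addS (scaleS k (a1 p)) (scaleS l (a2 p))),
  (fun p => `|k| * t1 p + `|l| * t2 p); split.
- by move=> p; rewrite addr_ge0 ?mulr_ge0.
- by move=> p; apply: normM_leD; apply: normM_leZ.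
- by move=> p; rewrite geq_max => /andP[/t1N -> /t2N ->]; rewrite !mulr0 addr0.
- under eq_bigr do rewrite mulrDl -!mulrA.
  rewrite big_split /= -!mulr_sumr.
  rewrite (sum_ord_widen_eq0 (F := fun p => t1 p / dl p) _ (leq_maxl N1 N2)); last first.
    by move=> p /t1N ->; rewrite mul0r.
  rewrite (sum_ord_widen_eq0 (F := fun p => t2 p / dl p) _ (leq_maxr N1 N2)); last first.
    by move=> p /t2N ->; rewrite mul0r.
  by apply: le_trans kl; apply: lerD; apply: ler_piMr.
- move=> eta; rewrite /addS /scaleS Hw1 Hw2 big_split /= -!mulr_sumr.
  rewrite (sum_ord_widen_eq0 (F := fun p => a1 p eta) _ (leq_maxl N1 N2)) => [|p /a1N]//.
  by rewrite (sum_ord_widen_eq0 (F := fun p => a2 p eta) _ (leq_maxr N1 N2)) => [|p /a2N].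
Qed.

Lemma hull_balls_ball M : 0 < M -> exists2 r, 0 < r & forall w, normM_le M w r -> hull_balls w.
Proof.
move=> M0; have [n Mn] := Mw_unbounded M0; exists (dl n) => // w Hw.
exists n.+1, (fun q => if q == n then w else fun _ => 0), (fun q => if q == n then dl n else 0).
split.
- by move=> q; case: ifP => // _; apply: ltW.
- move=> q; case: eqP => [->|_]; first exact: normM_le_lerM (ltW M0) Mn Hw.
  exact: normM_le_cst0 (ltW (Mw_gt0 q)) (lexx 0).
- by move=> q Hq; rewrite (gtn_eqF Hq).
- rewrite big_ord_recr /= eqxx big1 ?add0r ?mulfV ?gt_eqF //.
  by move=> q _; rewrite (ltn_eqF (ltn_ord q)) mul0r.
- move=> eta; rewrite big_ord_recr /= eqxx big1 ?add0r //.
  by move=> q _; rewrite (ltn_eqF (ltn_ord q)).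
Qed.

Lemma hull_balls_zero_nbhd : silva_zero_nbhd hull_balls.
Proof.
split; [exact: hull_balls_LC | split; [exact: hull_balls_abs_convex | exact: hull_balls_ball]].
Qed.

End HullOfBalls.

Lemma bernoulli_le (K : numDomainType) (b : K) n : 1 <= b -> 1 + n%:R * (b - 1) <= b ^+ n.
Proof.
move=> b1; have b0 : 0 <= b := le_trans ler01 b1.
elim: n => [|n IH]; first by rewrite mul0r addr0 expr0.
apply: le_trans (_ : b * (1 + n%:R * (b - 1)) <= _); last by rewrite exprS ler_wpM2l.
rewrite -subr_ge0 (_ : _ - _ = n%:R * (b - 1) ^+ 2); last by rewrite -addn1 natrD; ring.
by rewrite mulr_ge0 // exprn_ge0 // subr_ge0.
Qed.

Definition parallel_sum (K : numFieldType) (x y : K) : K := x * y / (x + y).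

Section ParallelSum.
Variables (K : numFieldType) (x y : K).
Hypotheses (x_gt0 : 0 < x) (y_gt0 : 0 < y).

Lemma parallel_sum_gt0 : 0 < parallel_sum x y.
Proof. by rewrite divr_gt0 ?mulr_gt0 ?addr_gt0. Qed.

Lemma parallel_sum_lel : parallel_sum x y <= x.
Proof. by rewrite ler_pdivrMr ?addr_gt0 // ler_pM2l // lerDr ltW. Qed.

Lemma parallel_sum_ler : parallel_sum x y <= y.
Proof. by rewrite ler_pdivrMr ?addr_gt0 // mulrC ler_pM2l // lerDl ltW. Qed.

End ParallelSum.

Section ShinvContinuity.
Variables (K : numFieldType) (m : nat).
Local Notation series := (series K m).
Hypothesis archK : forall M : K, 0 < M -> exists n : nat, M <= n%:R.
Variables (c : series) (Mc Rc : K).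
Hypotheses (Mc_gt0 : 0 < Mc) (c_bound : normM_le Mc c Rc) (c0_neq0 : c [::] != 0).

Let C := Rc + 1.
Let g := `|c [::]| / 2.
Let be := 1 + 4 * (C / g).
Let Mw p := be ^+ p * Mc.
Let L := shinv_lip C g.

Let C_gt0 : 0 < C. Proof. exact: ltr_wpDl (normM_le_ge0 c_bound) ltr01. Qed.
Let g_gt0 : 0 < g. Proof. by rewrite divr_gt0 ?normr_gt0. Qed.
Let be_gt1 : 1 < be. Proof. by rewrite ltrDl mulr_gt0 ?ltr0n // divr_gt0. Qed.
Let Mw_gt0 p : 0 < Mw p. Proof. exact: mulr_gt0 (exprn_gt0 _ (lt_trans ltr01 be_gt1)) Mc_gt0. Qed.
Let L_gt0 : 0 < L.
Proof.
rewrite /L /shinv_lip; apply: addr_gt0; apply: divr_gt0; rewrite ?ltr0n //.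
  exact: exprn_gt0.
exact: mulr_gt0.
Qed.
Let MwS p : Mw p.+1 = be * Mw p. Proof. by rewrite /Mw exprS mulrA. Qed.

Let Mw_homo : {homo Mw : p q / (p <= q)%N >-> p <= q}.
Proof. by move=> p q pq; rewrite ler_wpM2r ?(ltW Mc_gt0) // ler_weXn2l // ltW. Qed.

Let Mc_le_Mw p : Mc <= Mw p.
Proof. by rewrite ler_pMl // exprn_ege1 // ltW. Qed.

Let Mw_unbounded M : 0 < M -> exists n, M <= Mw n.
Proof.
have be1_gt0 : 0 < (be - 1) * Mc by rewrite mulr_gt0 // subr_gt0.
move=> M0; have [n Mn] := archK (divr_gt0 M0 be1_gt0); exists n.
move: Mn; rewrite ler_pdivrMr // => /le_trans; apply.
rewrite mulrA ler_wpM2r ?(ltW Mc_gt0) //.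
by apply: le_trans (bernoulli_le n (ltW be_gt1)); rewrite lerDr.
Qed.

Definition walk (a : nat -> series) j : series := fun eta => c eta + \sum_(p < j) a p eta.

Section Walk.
Variables (a : nat -> series) (t : nat -> K) (N : nat).
Hypotheses (t_ge0 : forall p, 0 <= t p) (a_bound : forall p, normM_le (Mw p) (a p) (t p))
  (t_sum_le1 : \sum_(p < N) t p <= 1) (t_sum_leg : \sum_(p < N) t p <= g).

Lemma walk_bound j k : (j <= N)%N -> (j <= k.+1)%N -> normM_le (Mw k) (walk a j) C.
Proof.
move=> jN jk; have Hc := normM_le_lerM (ltW Mc_gt0) (Mc_le_Mw k) c_bound.
have Ha : normM_le (Mw k) (fun eta => \sum_(p < j) a p eta) (\sum_(p < j) t p).
  apply: normM_le_sum => p pj; apply: normM_le_lerM (ltW (Mw_gt0 p)) _ (a_bound p).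
  by apply: Mw_homo; rewrite -ltnS (leq_trans pj).
apply: normM_le_ler (ltW (Mw_gt0 k)) _ (normM_leD Hc Ha).
by rewrite lerD2l (le_trans (sum_ord_prefix_le t_ge0 jN)).
Qed.

Lemma walk_coef0 j : (j <= N)%N -> g <= `|walk a j [::]|.
Proof.
move=> jN; have a0 : `|\sum_(p < j) a p [::]| <= g.
  apply: le_trans (ler_norm_sum _ _ _) (le_trans _ t_sum_leg).
  apply: le_trans (sum_ord_prefix_le t_ge0 jN); apply: ler_sum => p _.
  by have := a_bound p [::]; rewrite /= expr0 !mulr1.
apply: le_trans (lerB_normD _ _).
by rewrite (_ : `|c [::]| = g + g) ?lerBrDr ?lerD2l // /g; field.
Qed.

Lemma walk_step j : normM_le (Mw j) (fun u => walk a j.+1 u - walk a j u) (t j).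
Proof.
have -> : (fun u => walk a j.+1 u - walk a j u) = a j.
  by apply: funext => u; rewrite /walk big_ord_recr /=; ring.
exact: a_bound.
Qed.

Lemma shinv_walk_step j : (j < N)%N ->
  normM_le (Mw j.+1) (fun eta => shinv (walk a j.+1) eta - shinv (walk a j) eta) (t j * L).
Proof.
move=> jN; rewrite MwS; apply: normM_le_shinvB (Mw_gt0 j) C_gt0 g_gt0 _ _ (walk_step j) _ _.
- exact: walk_bound (ltnW jN) (leqnSn j).
- exact: walk_bound jN (leqnn _).
- exact: walk_coef0 (ltnW jN).
- exact: walk_coef0 jN.
Qed.

End Walk.

Lemma shinvB_in_nbhd (V : series -> Prop) (eps dl : nat -> K) : abs_convex V ->
  (forall j d, normM_le (Mw j.+1) d (eps j) -> V d) -> (forall j, 0 < eps j) ->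
  (forall j, 0 < dl j) -> (forall j, dl j <= parallel_sum g 1) -> (forall j, dl j * L <= eps j) ->
  forall d, hull_balls Mw dl (fun eta => d eta - c eta) ->
  V (fun eta => shinv d eta - shinv c eta).
Proof.
move=> Vconv Vball eps_gt0 dl_gt0 dl_le dlL d [N [a [t [t_ge0 a_bound _ t_sum Hd]]]].
have g'_gt0 := parallel_sum_gt0 g_gt0 ltr01.
have t_sum' : \sum_(p < N) t p <= parallel_sum g 1.
  apply: le_trans (_ : \sum_(p < N) parallel_sum g 1 * (t p / dl p) <= _).
    apply: ler_sum => p _; rewrite -{1}(divfK (lt0r_neq0 (dl_gt0 p)) (t p)) mulrC.
    by rewrite ler_wpM2r ?divr_ge0 ?(ltW (dl_gt0 p)).
  by rewrite -mulr_sumr; apply: ler_piMr => //; exact: ltW.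
have t_sum1 := le_trans t_sum' (parallel_sum_ler g_gt0 ltr01).
have t_sumg := le_trans t_sum' (parallel_sum_lel g_gt0 ltr01).
have walkN : walk a N = d by apply: funext => eta; rewrite /walk -Hd addrC subrK.
have walk0 : walk a 0 = c by apply: funext => eta; rewrite /walk big_ord0 addr0.
have -> : (fun eta => shinv d eta - shinv c eta) =
    fun eta => \sum_(j < N) (shinv (walk a j.+1) eta - shinv (walk a j) eta).
  apply: funext => eta; rewrite -walkN -{1}walk0.
  by rewrite -(big_mkord xpredT (fun j => shinv (walk a j.+1) eta - shinv (walk a j) eta))
    telescope_sumr.
apply: (abs_convex_sum Vconv Vball eps_gt0 (fun j => ltW (Mw_gt0 j.+1))
  (b := fun j eta => shinv (walk a j.+1) eta - shinv (walk a j) eta)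
  (s := fun j => t j * L / eps j)) => [j|j jN|].
- by rewrite divr_ge0 ?mulr_ge0 // ltW.
- by rewrite mulfVK ?lt0r_neq0 //; exact (shinv_walk_step t_ge0 a_bound t_sum1 t_sumg jN).
apply: le_trans t_sum; apply: ler_sum => j _; rewrite -mulrA ler_wpM2l //.
by rewrite ler_pdivrMr // mulrC -ler_pdivrMr ?invr_gt0 // invrK mulrC.
Qed.

Lemma shinv_continuous_at O : silva_open O -> O (shinv c) ->
  exists O', silva_open O' /\ O' c /\ forall d, O' d -> O (shinv d).
Proof.
move=> [_ Oopen] Oc; have [V [[_ [Vconv Vball]] VO]] := Oopen _ Oc.
have [eps eps_spec] : {eps : nat -> K & forall j,
    0 < eps j /\ forall d, normM_le (Mw j.+1) d (eps j) -> V d}.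
  apply: (@choice _ _ (fun j r => 0 < r /\ forall d, normM_le (Mw j.+1) d r -> V d)) => j.
  by have [r r0 Hr] := Vball _ (Mw_gt0 j.+1); exists r.
have eps_gt0 j := (eps_spec j).1.
pose dl j := parallel_sum (eps j / L) (parallel_sum g 1).
have g'_gt0 := parallel_sum_gt0 g_gt0 ltr01.
have eL_gt0 j : 0 < eps j / L by rewrite divr_gt0.
have dl_gt0 j : 0 < dl j by exact: parallel_sum_gt0.
have dlL j : dl j * L <= eps j by rewrite -ler_pdivlMr //; exact: parallel_sum_lel.
have Lc : LC c by exists Mc; split => //; exists Rc.
have [O' [O'open [O'c O'W]]] :=
  silva_open_nbhd (hull_balls_zero_nbhd m Mw_gt0 Mw_homo Mw_unbounded dl_gt0) Lc.
exists O'; split => //; split => // d /O'W dc.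
have := VO _ (shinvB_in_nbhd Vconv (fun j => (eps_spec j).2) eps_gt0 dl_gt0
  (fun j => parallel_sum_ler (eL_gt0 j) g'_gt0) dlL dc).
suff -> : addS (shinv c) (fun eta => shinv d eta - shinv c eta) = shinv d by [].
by apply: funext => eta; rewrite /addS addrC subrK.
Qed.

End ShinvContinuity.

Lemma shinv_continuous (K : numFieldType) (m : nat) :
  (forall M : K, 0 < M -> exists n : nat, M <= n%:R) ->
  silva_continuous_on (@LCunit K m) (@shinv K m).
Proof.
move=> archK c Uc O Oopen Oc; have [[Mc [Mc_gt0 [Rc c_bound]]] _] := Uc.
have [O' [O'open [O'c O'O]]] :=
  shinv_continuous_at archK Mc_gt0 c_bound (LCunit_coef0 Uc) Oopen Oc.
by exists O'; do 2!split => //; move=> d _; exact: O'O.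
Qed.

Lemma archi_real (R : realType) (M : R) : 0 < M -> exists n : nat, M <= n%:R.
Proof. by move=> M0; exists (Num.Def.archi_bound M); exact/ltW/archi_boundP/ltW. Qed.

Lemma archi_complex (R : realType) (M : R[i]) : 0 < M -> exists n : nat, M <= n%:R.
Proof.
rewrite ltcE => /andP[/eqP ImM ReM]; have [n Mn] := archi_real ReM.
by exists n; rewrite -(rmorph_nat (real_complex R)) lecE /= ImM eqxx Mn.
Qed.

Lemma prop3p6_archimedean (K : numFieldType) (m : nat) :
  (forall M : K, 0 < M -> exists n : nat, M <= n%:R) -> prop3p6_statement K m.
Proof.
move=> archK; split; first exact: shpow_cprime_eq0.
by split; [exact: LCunit_shinv | exact: shinv_continuous].
Qed.

Theorem proposition3p6 (R : realType) (m : nat) :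
  prop3p6_statement R m /\ prop3p6_statement (complex R) m.
Proof. by split; apply: prop3p6_archimedean; [exact: archi_real | exact: archi_complex]. Qed.
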